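(* Let $\kappa$ be a regular uncountable cardinal, $F$ a free filter on $\omega$, and $\mathbb{P}$ a finite support product of posets such that every finite subproduct is $\kappa$-$F$-Knaster. Then $\mathbb{P}$ is $\kappa$-$F$-Knaster. In particular, when $F$ is an ultrafilter, any finite support product of $\kappa$-$F$-Knaster posets is $\kappa$-$F$-Knaster; likewise any finite support product of $\kappa$-uf-Knaster posets is $\kappa$-uf-Knaster.
   Context: A filter $F$ on $\omega$ is free if it contains all cofinite subsets; $F^+$ is the family of sets meeting every member of $F$. For a poset $\mathbb{P}$ and $\bar p=\langle p_n:n<\omega\rangle$ in $\mathbb{P}$, $\dot W(\bar p)$ names $\{n:p_n\in\dot G\}$. $Q\subseteq\mathbb{P}$ is $F$-linked if for every sequence $\bar p$ in $Q$ some $q\in\mathbb{P}$ forces $\dot W(\bar p)\in F^+$; uf-linked if it is $D$-linked for every non-principal ultrafilter $D$ on $\omega$. $\mathbb{P}$ is $\kappa$-$F$-Knaster (resp. $\kappa$-uf-Knaster) if every subset of size $\kappa$ contains an $F$-linked (resp. uf-linked) subset of size $\kappa$. *)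

From HB Require Import structures.
From mathcomp Require Import all_boot all_order.
From mathcomp Require Import boolp classical_sets functions cardinality filter.
Set Implicit Arguments. Unset Strict Implicit. Unset Printing Implicit Defensive.
Local Open Scope classical_set_scope.
Local Open Scope card_scope.

(** A regular uncountable cardinal kappa, represented by a type K of
    cardinality kappa. *)
Definition card_lt T U (A : set T) (B : set U) := ~ (B #<= A).

Definition regular_uncountable (K : Type) : Prop :=
  ~ countable [set: K] /\
  (forall (I : set K) (A : K -> set K),
      card_lt I [set: K] -> (forall i, I i -> card_lt (A i) [set: K]) ->
      \bigcup_(i in I) A i <> [set: K]).

Definition free_filter (F : set_system nat) : Prop :=
  ProperFilter F /\ (forall A : set nat, finite_set (~` A) -> F A).

Record fposet := FPoset {
  fcar :> Type;
  fle : fcar -> fcar -> Prop;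
  fle_refl : forall p, fle p p;
  fle_trans : forall p q r, fle p q -> fle q r -> fle p r;
  fle_anti : forall p q, fle p q -> fle q p -> p = q;
  fone : fcar;
  fle_one : forall p, fle p fone }.

Section Knaster.
Variables (T : Type) (le : T -> T -> Prop).

(** q forces  W(pbar) = {n | p_n in G} in F^+ , i.e. for every A in F,
    q forces "exists n in A, p_n in G", i.e. the set of conditions below
    some p_n with n in A is dense below q. *)
Definition forces_Wpos (F : set_system nat) (p : nat -> T) (q : T) : Prop :=
  forall A, F A -> forall r, le r q ->
    exists s n, le s r /\ A n /\ le s (p n).

Definition F_linked (F : set_system nat) (Q : set T) : Prop :=
  forall p : nat -> T, (forall n, Q (p n)) -> exists q, forces_Wpos F p q.

Definition nonprincipal_ultrafilter (D : set_system nat) : Prop :=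
  UltraFilter D /\ free_filter D.

Definition uf_linked (Q : set T) : Prop :=
  forall D, nonprincipal_ultrafilter D -> F_linked D Q.

Definition F_Knaster (K : Type) (F : set_system nat) : Prop :=
  forall X : set T, X #= [set: K] ->
    exists Y : set T, Y `<=` X /\ Y #= [set: K] /\ F_linked F Y.

Definition uf_Knaster (K : Type) : Prop :=
  forall X : set T, X #= [set: K] ->
    exists Y : set T, Y `<=` X /\ Y #= [set: K] /\ uf_linked Y.
End Knaster.

Section Product.
Variables (I : Type) (P : I -> fposet).

Definition support (f : forall i, P i) : set I := [set i | f i <> fone (P i)].

Definition fsprod := {f : forall i, P i | finite_set (support f)}.

Definition fsprod_le (f g : fsprod) : Prop :=
  forall i, fle (proj1_sig f i) (proj1_sig g i).

Definition subprod (J : set I) := {f : forall i, P i | support f `<=` J}.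

Definition subprod_le (J : set I) (f g : subprod J) : Prop :=
  forall i, fle (proj1_sig f i) (proj1_sig g i).
End Product.

(* The Delta-system lemma for the regular uncountable kappa thins any kappa
   conditions of the product to kappa conditions whose supports pairwise meet
   inside a finite root R; pigeonholing their restrictions to R and using the
   Knaster property of the subproduct over R makes these restrictions F-linked.
   Such a family is F-linked in the whole product: unless a single condition
   recurs F-positively often, for every coordinate outside R an F-set of indices
   n has p_n trivial there (distinct members meet only inside R), so a common
   extension on R of a condition r and of p_n extends to one of r and p_n.
   For an ultrafilter F, finite products of F-linked families are F-linked
   coordinatewise, since the indices compatible with a given condition in each
   coordinate form an F-set; the uf case runs the argument for all
   nonprincipal ultrafilters at once. *)

From Pilot Require Import Defs.
From mathcomp Require Import all_boot all_order finmap.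
From mathcomp Require Import boolp classical_sets functions cardinality filter.
Set Implicit Arguments. Unset Strict Implicit. Unset Printing Implicit Defensive.
Local Open Scope classical_set_scope.
Local Open Scope card_scope.

Lemma card_le_inj T U (A : set T) (B : set U) (f : T -> U) :
  {in A &, injective f} -> f @` A `<=` B -> A #<= B.
Proof.
move=> finj fAB; apply: card_le_trans (subset_card_le fAB).
by have /card_eqPle[] := card_esym (inj_card_eq finj).
Qed.

Lemma card_setD1 T (A : set T) (a : T) n : A #= `I_n.+1 -> A a -> A `\ a #= `I_n.
Proof.
move=> An Aa; have fA : finite_set A by exists n.+1.
rewrite -(@fset_setK {classic T} _ (finite_setD _ fA)).
apply/(@card_eq_fsetP {classic T}); rewrite fset_setD1 //.
have := @card_fset_set {classic T} _ _ An.
by rewrite (@cardfsD1 {classic T} a) in_fset_set // mem_set //= add1n => -[].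
Qed.

Lemma finite_set_ind T (Pr : set T -> Prop) :
  Pr set0 -> (forall A x, finite_set A -> Pr A -> Pr (x |` A)) ->
  forall A, finite_set A -> Pr A.
Proof.
move=> P0 PU A [n]; elim: n A => [|n IHn] A.
  by rewrite II0 card_eq0 => /eqP ->.
move=> /eq_cardSP[x Ax AxI]; rewrite -(setD1K Ax).
by apply: PU; [exists n | exact: IHn].
Qed.

Lemma card_le_injP T U (A : set T) (B : set U) : A !=set0 -> A #<= B ->
  exists2 f : T -> U, f @` A `<=` B & {in A &, injective f}.
Proof.
elim/Ppointed: U B => U B.
  by rewrite (empty_eq0 B) => [[x Ax]] /card_le0P A0; rewrite A0 in Ax.
move=> _ /pcard_leP[f]; exists f; first by move=> _ [x Ax <-]; apply: funS.
exact: inj.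
Qed.

Definition delta_system S I (supp : S -> set I) (Z : set S) (R : set I) :=
  forall s t, Z s -> Z t -> s <> t -> supp s `&` supp t `<=` R.

Section Regular.
Variables (K : Type) (hK : regular_uncountable K).

Definition large T (A : set T) := [set: K] #<= A.

Definition refinable T (Phi : set T -> Prop) :=
  forall X, X #= [set: K] -> exists Y, Y `<=` X /\ Y #= [set: K] /\ Phi Y.

Lemma large_card_le T U (A : set T) (B : set U) : A #<= B -> large A -> large B.
Proof. by move=> AB KA; apply: card_le_trans KA AB. Qed.

Lemma largeS T (A B : set T) : A `<=` B -> large A -> large B.
Proof. by move/subset_card_le; apply: large_card_le. Qed.

Lemma countable_not_large T (A : set T) : countable A -> ~ large A.
Proof. by move=> cA KA; apply: hK.1; apply: card_le_trans KA cA. Qed.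

Lemma large_neq0 T (A : set T) : large A -> A !=set0.
Proof.
move=> KA; apply/set0P/eqP => A0; apply: hK.1.
by move: KA; rewrite A0 => /card_le0P ->; exact: countable0.
Qed.

Lemma large_card_eq T (X Y : set T) :
  Y `<=` X -> X #= [set: K] -> large Y -> Y #= [set: K].
Proof.
move=> YX /card_eqPle[XK _] KY; apply/card_eqPle; split => //.
exact: card_le_trans (subset_card_le YX) XK.
Qed.

(* Regularity of kappa, transported from subsets of K to any index set through
   an injection of K into the union. *)
Lemma bigcup_not_large A T (J : set A) (B : A -> set T) :
  ~ large J -> (forall j, J j -> ~ large (B j)) -> ~ large (\bigcup_(j in J) B j).
Proof.
move=> nJ nB KU; have K0 := large_neq0 (card_lexx [set: K]); have [k0 _] := K0.
have [f fB finj] := card_le_injP K0 KU.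
have /all_sig[g gP] : forall k, {j | J j /\ B j (f k)}.
  by move=> k; apply: cid; have [j Jj Bj] := fB (f k) (imageP _ I); exists j.
have /all_sig[rep repP] : forall j, {k | forall k', g k' = j -> g k = j}.
  move=> j; apply: cid; case: (pselect (exists k', g k' = j)) => [[k' <-]|nj].
    by exists k'.
  by exists k0 => k' gk'; case: nj; exists k'.
have grepK k : g (rep (g k)) = g k by exact: repP.
apply: (hK.2 [set k | rep (g k) = k] (fun k => [set k' | g k' = g k])).
- move=> KI; apply: nJ; apply: large_card_le KI.
  apply: (@card_le_inj _ _ _ _ g) => [k k' /set_mem kI /set_mem k'I gkk'|_ [k _ <-]].
    by rewrite -kI -k'I gkk'.
  exact: (gP k).1.
- move=> k _ KA; apply: (nB (g k) (gP k).1); apply: large_card_le KA.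
  apply: (card_le_inj (f := f)) => [k1 k2 _ _|_ [k1 /= gk1 <-]].
    by apply: finj; rewrite inE.
  by rewrite -gk1; exact: (gP k1).2.
- by apply/seteqP; split => // k _; exists (rep (g k)); rewrite /= grepK.
Qed.

Lemma setU_not_large T (A B : set T) : ~ large A -> ~ large B -> ~ large (A `|` B).
Proof.
move=> nA nB; rewrite -bigcup2inE.
apply: bigcup_not_large => [|i /= i2]; first exact/countable_not_large/countableP.
by case: i i2 => [|[|]].
Qed.

Lemma large_fiber T U (X : set T) (f : T -> U) :
  large X -> ~ large (f @` X) -> exists u, large (X `&` f @^-1` [set u]).
Proof.
move=> KX nfX; apply: contrapT => nfib.
apply: (bigcup_not_large nfX (B := fun u => X `&` f @^-1` [set u])).
  by move=> u _ Ku; apply: nfib; exists u.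
by apply: largeS KX => x Xx; exists (f x) => //; exists x.
Qed.

Lemma image_section T U (X : set T) (f : T -> U) (V : set U) :
  V `<=` f @` X -> exists Y, [/\ Y `<=` X, f @` Y = V & Y #= V].
Proof.
move=> VfX; case: (pselect (V !=set0)) => [[v0 /VfX[x0 _ _]]|/nonemptyPn ->]; last first.
  by exists set0; rewrite image_set0; split => //; exact: card_eq00.
have /all_sig[g gP] : forall v, {x | V v -> X x /\ f x = v}.
  move=> v; apply: cid; case: (pselect (V v)) => [/VfX[x Xx <-]|nV]; first by exists x.
  by exists x0.
have fgV : f @` (g @` V) = V.
  apply/seteqP; split => [_ [_ [v Vv <-] <-]|v Vv]; first by rewrite (gP v Vv).2.
  by exists (g v); [exists v | rewrite (gP v Vv).2].
exists (g @` V); split => //; first by move=> _ [v Vv <-]; exact: (gP v Vv).1.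
apply: inj_card_eq => v w /set_mem Vv /set_mem Vw gvw.
by rewrite -(gP v Vv).2 -(gP w Vw).2 gvw.
Qed.

Lemma refinable_image T U (f : T -> U) (Phi : set U -> Prop) :
  refinable Phi -> (forall u, Phi [set u]) -> refinable (fun Y => Phi (f @` Y)).
Proof.
move=> rPhi Phi1 X XK; have /card_eqPle[XK1 KX] := XK.
case: (pselect (large (f @` X))) => [KfX|nfX]; last first.
  have [u Ku] := large_fiber KX nfX.
  exists (X `&` f @^-1` [set u]); split; first exact: subIsetl.
  split; first exact: large_card_eq (@subIsetl _ _ _) XK Ku.
  suff -> : f @` (X `&` f @^-1` [set u]) = [set u] by [].
  apply/seteqP; split; first by move=> _ [x [_ <-] <-].
  by move=> _ ->; have [x [Xx fx]] := large_neq0 Ku; exists x.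
have fXK : f @` X #= [set: K].
  apply/card_eqPle; split => //.
  exact: card_le_trans (card_image_le f X) XK1.
have [V [VfX [VK PhiV]]] := rPhi _ fXK.
have [Y [YX fY YV]] := image_section VfX.
by exists Y; split => //; split; [exact: card_eq_trans YV VK | rewrite fY].
Qed.

Lemma refinable_forall_finite A T (J : set A) (Phi : A -> set T -> Prop) :
  finite_set J -> (forall j, J j -> refinable (Phi j)) ->
  (forall j Y Y', Y `<=` Y' -> Phi j Y' -> Phi j Y) ->
  refinable (fun Y => forall j, J j -> Phi j Y).
Proof.
move=> fJ + PhiS; elim/finite_set_ind: J / fJ => [_|J j _ IH rPhi] X XK.
  by exists X; split => //; split => // j [].
have [Y [YX [YK PhiY]]] := IH (fun i Ji => rPhi i (or_intror Ji)) X XK.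
have [Y' [Y'Y [Y'K PhiY']]] := rPhi j (or_introl erefl) Y YK.
exists Y'; split => [y /Y'Y /YX //|]; split => // i [->|Ji] //.
exact: PhiS Y'Y (PhiY i Ji).
Qed.

Lemma large_disjoint_subfamily S I (supp : S -> set I) (X : set S) :
  large X -> (forall t, X t -> finite_set (supp t)) ->
  (forall i, ~ large (X `&` [set t | supp t i])) ->
  exists M, [/\ M `<=` X, large M & delta_system supp M set0].
Proof.
(* If a maximal disjoint subfamily M were small, every member of X would lie in
   M or share a point with the small union of the supports of M. *)
move=> KX fsupp nKi.
pose PP := [set M | M `<=` X /\ delta_system supp M set0].
have [M [[MX MD] Mmax]] : exists M, PP M /\ forall B, M `<` B -> ~ PP B.
  apply: Zorn_bigcup => FF FFP Ftot; split.
    by move=> t [M /FFP [MX _] Mt]; apply: MX.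
  move=> f g [M1 F1 M1f] [M2 F2 M2g].
  have [M12|M21] := Ftot _ _ F1 F2.
    by apply: (FFP _ F2).2 => //; apply: M12.
  by apply: (FFP _ F1).2 => //; apply: M21.
exists M; split => //; apply: contrapT => nKM.
have nKsupp : ~ large (\bigcup_(m in M) supp m).
  apply: bigcup_not_large => // m Mm.
  exact/countable_not_large/finite_set_countable/fsupp/MX.
have nKmeet : ~ large (\bigcup_(i in \bigcup_(m in M) supp m)
                          (X `&` [set t | supp t i])).
  by apply: (bigcup_not_large nKsupp) => i _; exact: nKi.
apply: (setU_not_large nKM nKmeet); apply: largeS KX => t Xt.
case: (pselect (M t)) => Mt; [by left | right].
have [m Mm [i [mi ti]]] : exists2 m, M m & exists i, supp m i /\ supp t i.
  apply: contrapT => nmeet; apply: (Mmax (t |` M)).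
    split; first by move=> x Mx; right.
    by move=> /(_ t (or_introl erefl)).
  split; first by move=> x [->|/MX].
  move=> f g [->|Mf] [->|Mg] fg i [fi gi] //.
  - by case: nmeet; exists g => //; exists i.
  - by case: nmeet; exists f => //; exists i.
  - exact: MD (conj fi gi).
by exists i; [exists m | split].
Qed.

Lemma delta_system_uniform n : forall S I (supp : S -> set I) (X : set S),
  X #= [set: K] -> (forall t, X t -> supp t #= `I_n) ->
  exists Z, [/\ Z `<=` X, Z #= [set: K]
             & exists2 R, finite_set R & delta_system supp Z R].
Proof.
elim: n => [|n IHn] S I supp X XK Xn.
  exists X; split => //; exists set0 => // s t Xs _ _ i [si _].
  by move: (Xn s Xs); rewrite II0 card_eq0 => /eqP supp0; rewrite supp0 in si.
have /card_eqPle[_ KX] := XK.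
case: (pselect (exists i, large (X `&` [set t | supp t i]))) => [[a Ka]|nK].
  have XaK := large_card_eq (@subIsetl _ _ _) XK Ka.
  have [Z [ZXa ZK [R fR ZR]]] := IHn S I (fun t => supp t `\ a) _ XaK
    (fun t '(conj Xt ta) => card_setD1 (Xn t Xt) ta).
  exists Z; split => //; first by move=> t /ZXa[].
  exists (a |` R); first by rewrite finite_setU; split => //; exact: finite_set1.
  move=> s t Zs Zt st i [si ti]; have [->|ia] := pselect (i = a); first by left.
  by right; apply: (ZR s t Zs Zt st).
have fsupp t : X t -> finite_set (supp t) by move=> Xt; exists n.+1; exact: Xn.
have [M [MX KM MD]] :=
  large_disjoint_subfamily KX fsupp (fun i Ki => nK (ex_intro _ i Ki)).
by exists M; split => //; [exact: large_card_eq MX XK KM | exists set0].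
Qed.

Lemma delta_system_lemma S I (supp : S -> set I) :
  (forall t, finite_set (supp t)) ->
  refinable (fun Z => exists2 R, finite_set R & delta_system supp Z R).
Proof.
move=> fsupp X XK; have /card_eqPle[_ KX] := XK.
have [n Kn] : exists n, large (X `&` [set t | supp t #= `I_n]).
  apply: contrapT => nK.
  apply: (bigcup_not_large (J := setT) (B := fun n => X `&` [set t | supp t #= `I_n])).
  - exact/countable_not_large/countableP.
  - by move=> n _ Kn; apply: nK; exists n.
  - by apply: largeS KX => t Xt; have [n tn] := fsupp t; exists n.
have [Z [ZXn ZK hZ]] := delta_system_uniform (large_card_eq (@subIsetl _ _ _) XK Kn)
  (fun t Xnt => Xnt.2).
by exists Z; split => // t /ZXn[].
Qed.
End Regular.

Lemma filter_forall_finite T A (F : set_system T) {FF : Filter F} (J : set A)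
    (Q : A -> set T) :
  finite_set J -> (forall j, J j -> F (Q j)) -> F [set x | forall j, J j -> Q j x].
Proof.
move=> fJ; elim/finite_set_ind: J / fJ => [_|J j _ IH FQ].
  by apply: filterS filterT => x _ j [].
apply: filterS (filterI (FQ j (or_introl erefl)) (IH (fun i Ji => FQ i (or_intror Ji)))).
by move=> x [Qjx QJx] i [->|Ji]; [exact: Qjx | exact: QJx].
Qed.

Lemma ultra_of_meets T (D : set_system T) (C : set T) :
  UltraFilter D -> (forall A, D A -> A `&` C !=set0) -> D C.
Proof.
by move=> UD meets; case: (in_ultra_setVsetC C UD) => // /meets[x [nCx Cx]].
Qed.

Section Linked.
Variables (T : Type) (le : T -> T -> Prop).
Hypothesis le_refl : forall p, le p p.

(* [DD = [set F]] gives F-linkedness, DD = nonprincipal ultrafilters gives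
   uf-linkedness. *)
Definition linked_for (DD : set (set_system nat)) (Y : set T) :=
  forall D, DD D -> F_linked le D Y.

Lemma sub_linked_for DD (Y Y' : set T) :
  Y `<=` Y' -> linked_for DD Y' -> linked_for DD Y.
Proof. by move=> YY' linkY' D DD_D p Yp; apply: linkY' => // n; apply: YY'. Qed.

Lemma forces_Wpos_frequent (D : set_system nat) (p : nat -> T) (x : T) :
  (forall A, D A -> exists2 n, A n & p n = x) -> forces_Wpos le D p x.
Proof.
by move=> freq A DA r rx; have [n An pnx] := freq A DA; exists r, n; rewrite pnx.
Qed.

Lemma linked_for_set1 DD (u : T) :
  (forall D, DD D -> ProperFilter D) -> linked_for DD [set u].
Proof.
move=> DDP D DD_D p pu; exists u; apply: forces_Wpos_frequent => A DA.
by have [n An] := @filter_ex _ D (DDP D DD_D) _ DA; exists n; last exact: pu.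
Qed.
End Linked.

Section Product.
Variables (I : Type) (P : I -> fposet).
Local Notation support := (@Defs.support I P).

Lemma fsprod_le_refl (f : fsprod P) : fsprod_le f f.
Proof. by move=> i; exact: fle_refl. Qed.

Lemma subprod_le_refl R (f : subprod P R) : subprod_le f f.
Proof. by move=> i; exact: fle_refl. Qed.

Lemma not_support (f : forall i, P i) i : ~ support f i -> f i = fone (P i).
Proof. exact: contrapT. Qed.

Lemma subprod_fone J (f : subprod P J) i : ~ J i -> sval f i = fone (P i).
Proof. by move=> nJi; apply: not_support => /(svalP f). Qed.

Definition restrict (R : set I) (f : forall i, P i) : forall i, P i :=
  fun i => if pselect (R i) then f i else fone (P i).

Lemma restrict_in R f i : R i -> restrict R f i = f i.
Proof. by rewrite /restrict; case: pselect. Qed.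

Lemma restrict_notin R f i : ~ R i -> restrict R f i = fone (P i).
Proof. by rewrite /restrict; case: pselect. Qed.

Lemma support_restrict R f : support (restrict R f) `<=` R.
Proof. by move=> i; rewrite /Defs.support /restrict /=; case: pselect. Qed.

Definition fsprod_restrict R (f : fsprod P) : subprod P R :=
  exist _ (restrict R (sval f)) (@support_restrict R (sval f)).

Lemma subprod_choice (R : set I) (Q : forall i, P i -> Prop) :
  (forall i, R i -> exists x, Q i x) ->
  exists f : subprod P R, forall i, R i -> Q i (sval f i).
Proof.
move=> exQ; have /all_sig[g gP] : forall i, {x : P i | R i -> Q i x}.
  move=> i; apply: cid; case: (pselect (R i)) => [/exQ[x Qx]|nRi]; first by exists x.
  by exists (fone (P i)) => /nRi.
exists (exist _ (restrict R g) (@support_restrict R g)) => i Ri /=.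
by rewrite restrict_in //; exact: gP.
Qed.

Lemma fsprod_compatible (R : set I) (r q : fsprod P) (s' : subprod P R) :
  finite_set R -> support (sval r) `&` support (sval q) `<=` R ->
  subprod_le s' (fsprod_restrict R r) -> subprod_le s' (fsprod_restrict R q) ->
  exists s, fsprod_le s r /\ fsprod_le s q.
Proof.
move=> fR rqR s'r s'q.
pose s i := if pselect (R i) then sval s' i
  else if pselect (support (sval r) i) then sval r i else sval q i.
have fs : finite_set (support s).
  apply: (@sub_finite_set _ _ (R `|` support (sval r) `|` support (sval q))).
    move=> i; rewrite {1}/Defs.support /s /=.
    case: (pselect (R i)) => [Ri _|nRi]; first by left; left.
    by case: (pselect (support (sval r) i)) => [ri _|nri qi]; [left; right | right].
  by rewrite !finite_setU; split; [split => //; exact: (svalP r) | exact: (svalP q)].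
exists (exist _ s fs); split => i; rewrite /Defs.support /s /=; case: pselect => Ri.
- by have := s'r i; rewrite /= restrict_in.
- case: pselect => ri; first exact: fle_refl.
  by rewrite (not_support ri); exact: fle_one.
- by have := s'q i; rewrite /= restrict_in.
- case: pselect => ri; last exact: fle_refl.
  have nqi : ~ support (sval q) i by move=> qi; apply: Ri; exact: rqR.
  by rewrite (not_support nqi); exact: fle_one.
Qed.

Lemma delta_system_linked (D : set_system nat) (R : set I) (Z : set (fsprod P)) :
  ProperFilter D -> finite_set R -> delta_system (fun f => support (sval f)) Z R ->
  F_linked (@subprod_le I P R) D (fsprod_restrict R @` Z) ->
  F_linked (@fsprod_le I P) D Z.
Proof.
(* Unless some value of p recurs F-positively often (and then forces W(p) in
   F^+ by itself), the Delta-system property makes each coordinate outside R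
   trivial in p n for an F-set of indices n. *)
move=> PD fR ZR linkR p Zp.
case: (pselect (exists x, forall A, D A -> exists2 n, A n & p n = x)) => [[x freq]|nfreq].
  by exists x; exact: (forces_Wpos_frequent (@fsprod_le_refl) freq).
have avoid x : exists2 A, D A & forall n, A n -> p n <> x.
  apply: contrapT => nA; apply: nfreq; exists x => A DA; apply: contrapT => nAx.
  by apply: nA; exists A => // n An pnx; apply: nAx; exists n.
have off_root i : ~ R i -> D [set n | ~ support (sval (p n)) i].
  move=> nRi; case: (pselect (exists m, support (sval (p m)) i)) => [[m pmi]|nsupp].
    have [A DA Apm] := avoid (p m); apply: filterS DA => n An pni.
    by apply: nRi; apply: (ZR _ _ (Zp n) (Zp m) (Apm n An)).
  by apply: filterS filterT => n _ pni; apply: nsupp; exists n.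
have [q' hq'] := linkR (fun n => fsprod_restrict R (p n)) (fun n => imageP _ (Zp n)).
exists (exist _ (sval q') (sub_finite_set (svalP q') fR)) => A DA r rq.
have rq' : subprod_le (fsprod_restrict R r) q'.
  move=> i; case: (pselect (R i)) => [Ri|nRi].
    by rewrite /= restrict_in //; exact: rq.
  by rewrite /= restrict_notin // subprod_fone //; exact: fle_refl.
have DA' : D [set n | forall i, (support (sval r) `\` R) i -> ~ support (sval (p n)) i].
  apply: filter_forall_finite (finite_setD R (svalP r)) _ => i [_ nRi].
  exact: off_root.
have [s' [n [s'r [[An A'n] s'p]]]] := hq' _ (filterI DA DA') _ rq'.
have rpR : support (sval r) `&` support (sval (p n)) `<=` R.
  by move=> i [ri pni]; apply: contrapT => nRi; exact: A'n i (conj ri nRi) pni.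
have [s [sr sp]] := fsprod_compatible fR rpR s'r s'p.
by exists s, n.
Qed.

Lemma subprod_linked (D : set_system nat) (R : set I) (Y : set (subprod P R)) :
  UltraFilter D -> finite_set R ->
  (forall i, R i -> F_linked (@fle (P i)) D ((fun f : subprod P R => sval f i) @` Y)) ->
  F_linked (@subprod_le I P R) D Y.
Proof.
move=> UD fR linkY p Yp.
have [q qP] := subprod_choice
  (Q := fun i x => forces_Wpos (@fle (P i)) D (fun n => sval (p n) i) x)
  (fun i Ri => linkY i Ri _ (fun n => imageP _ (Yp n))).
exists q => A DA r rq.
have compat i : R i -> D [set n | exists s, fle s (sval r i) /\ fle s (sval (p n) i)].
  move=> Ri; apply: ultra_of_meets => B DB.
  have [s [n [sr [Bn sp]]]] := qP i Ri B DB _ (rq i).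
  by exists n; split => //; exists s.
have [n [An Cn]] := filter_ex (filterI DA (filter_forall_finite fR compat)).
have [s sP] := subprod_choice
  (Q := fun i x => fle x (sval r i) /\ fle x (sval (p n) i)) (fun i Ri => Cn i Ri).
have sle i : fle (sval s i) (sval r i) /\ fle (sval s i) (sval (p n) i).
  case: (pselect (R i)) => [/sP//|nRi].
  by rewrite !subprod_fone //; split; exact: fle_refl.
by exists s, n; split; [move=> i; exact: (sle i).1 | split => // i; exact: (sle i).2].
Qed.
End Product.

Section Main.
Variables (K : Type) (hK : regular_uncountable K) (I : Type) (P : I -> fposet).

Lemma fsprod_refinable (DD : set (set_system nat)) :
  (forall D, DD D -> ProperFilter D) ->
  (forall J, finite_set J -> refinable K (linked_for (@subprod_le I P J) DD)) ->
  refinable K (linked_for (@fsprod_le I P) DD).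
Proof.
move=> DDP subK X XK.
have [Z [ZX [ZK [R fR ZR]]]] := delta_system_lemma hK (fun f : fsprod P => svalP f) XK.
have [Y [YZ [YK linkY]]] := refinable_image hK (fsprod_restrict R) (subK R fR)
  (fun u => linked_for_set1 (@subprod_le_refl I P R) (u := u) DDP) ZK.
exists Y; split; first by move=> y /YZ /ZX.
split => // D DD_D; apply: delta_system_linked (DDP D DD_D) fR _ (linkY D DD_D).
by move=> f g Yf Yg; exact: ZR (YZ _ Yf) (YZ _ Yg).
Qed.

Lemma subprod_refinable (DD : set (set_system nat)) :
  (forall D, DD D -> UltraFilter D) ->
  (forall i, refinable K (linked_for (@fle (P i)) DD)) ->
  forall J, finite_set J -> refinable K (linked_for (@subprod_le I P J) DD).
Proof.
move=> DDU coordK J fJ X XK.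
pose Phi i (Y : set (subprod P J)) :=
  linked_for (@fle (P i)) DD ((fun f => sval f i) @` Y).
have PhiS i Y Y' : Y `<=` Y' -> Phi i Y' -> Phi i Y.
  by move=> YY'; apply: sub_linked_for; exact: image_subset.
have rPhi i : J i -> refinable K (Phi i).
  move=> _; apply: (refinable_image hK (fun f => sval f i) (coordK i)) => u.
  by apply: (linked_for_set1 (@fle_refl (P i))) => D /DDU UD; exact: ultra_proper.
have [Y [YX [YK linkY]]] := refinable_forall_finite fJ rPhi PhiS XK.
exists Y; split => //; split => // D DD_D; apply: subprod_linked (DDU D DD_D) fJ _.
by move=> i Ji; exact: linkY i Ji D DD_D.
Qed.
End Main.

Lemma F_KnasterE T (le : T -> T -> Prop) K F :
  F_Knaster le K F <-> refinable K (linked_for le [set F]).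
Proof.
by split => Kn X XK; have [Y [YX [YK linkY]]] := Kn X XK; exists Y;
  do 2 split => //; [move=> D -> | exact: linkY].
Qed.

Theorem theorem3p21 (K : Type) (hK : regular_uncountable K)
    (F : set_system nat) (hF : free_filter F)
    (I : Type) (P : I -> fposet) :
  ((forall J : set I, finite_set J -> F_Knaster (@subprod_le I P J) K F) ->
     F_Knaster (@fsprod_le I P) K F)
  /\ (UltraFilter F ->
      (forall i, F_Knaster (@fle (P i)) K F) ->
      F_Knaster (@fsprod_le I P) K F)
  /\ ((forall i, uf_Knaster (@fle (P i)) K) ->
      uf_Knaster (@fsprod_le I P) K).
Proof.
have properF D : [set F] D -> ProperFilter D by move=> ->; exact: hF.1.
split; [|split].
- move=> subK; apply/F_KnasterE/(fsprod_refinable hK properF) => J fJ.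
  exact/F_KnasterE/subK.
- move=> UF coordK; apply/F_KnasterE/(fsprod_refinable hK properF).
  by apply: (subprod_refinable hK) => [D ->|i]; last exact/F_KnasterE/coordK.
- move=> coordK; apply: (fsprod_refinable hK) => [D [UD _]|]; first exact: ultra_proper.
  by apply: (subprod_refinable hK) => [D []|].
Qed.
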